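(* Let $M$ be a complete non-ambiguous matrix (CNM) of size $n\ge 1$ and let $\pi(M)\in S_n$ be its associated permutation. Then $\det(M)=\operatorname{sgn}(\pi(M))$.
   Context: A complete non-ambiguous matrix (CNM) of size $n$ is an $n\times n$ matrix $M=(m_{i,j})$ with entries in $\{0,1\}$ whose support $T=\{(i,j): m_{i,j}=1\}$ (whose elements are called vertices) satisfies: (1) $(1,1)\in T$ (the root); (2) for every $p=(i,j)\in T$ with $p\neq(1,1)$, exactly one of the following holds: there is $(i',j)\in T$ with $i'<i$, or there is $(i,j')\in T$ with $j'<j$; (3) every row and every column of $M$ contains at least one vertex; (4) completeness: define the parent of $p=(i,j)\neq(1,1)$ to be $(i',j)$ with $i'<i$ maximal if such a vertex exists, and otherwise $(i,j')$ with $j'<j$ maximal; then every vertex is the parent of either zero or exactly two vertices. A vertex with no children is a leaf. (CNMs are exactly the matrix encodings of complete non-ambiguous trees.) Each row and each column of a CNM contains exactly one leaf, so the leaf matrix $p(M)$, obtained from $M$ by replacing all non-leaf vertices by $0$, is a permutation matrix; the associated permutation $\pi(M)\in S_n$ is the permutation with $\pi(M)(i)=j$ iff $(i,j)$ is a leaf. $\operatorname{sgn}$ denotes the sign of a permutation. *)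

(* Indices are 0-based: row/column 1 of the paper is index 0. *)
From mathcomp Require Import all_boot all_order all_algebra all_fingroup.
Set Implicit Arguments. Unset Strict Implicit. Unset Printing Implicit Defensive.
Import GRing.Theory Num.Theory.
Local Open Scope ring_scope.

Section CNM.
Variable n : nat.
Implicit Types (M : 'M[int]_n) (p q : 'I_n * 'I_n).

Definition vx M p : bool := M p.1 p.2 == 1.

Definition is_root p : bool := (val p.1 == 0%N) && (val p.2 == 0%N).

Definition has_above M p : bool :=
  [exists i' : 'I_n, (i' < p.1)%N && vx M (i', p.2)].

Definition has_left M p : bool :=
  [exists j' : 'I_n, (j' < p.2)%N && vx M (p.1, j')].

Definition parent_of M p q : bool :=
  [&& vx M p, ~~ is_root p, vx M q &
   if has_above M p then
     [&& q.2 == p.2, (q.1 < p.1)%N &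
         [forall k : 'I_n, ((q.1 < k)%N && (k < p.1)%N) ==> ~~ vx M (k, p.2)]]
   else
     [&& q.1 == p.1, (q.2 < p.2)%N &
         [forall k : 'I_n, ((q.2 < k)%N && (k < p.2)%N) ==> ~~ vx M (p.1, k)]]].

Definition children M q : {set 'I_n * 'I_n} := [set p | parent_of M p q].

Definition is_leaf M p : bool := vx M p && (#|children M p| == 0%N).
End CNM.

Section CNM2.
Variable n : nat.
Definition is_CNM (M : 'M[int]_n) : Prop :=
  [/\
      (forall i j, M i j = 0 \/ M i j = 1),
      (forall p, is_root p -> vx M p),
      (forall p, vx M p -> ~~ is_root p -> has_above M p (+) has_left M p),
      (forall i : 'I_n, exists j, vx M (i, j)) /\ (forall j : 'I_n, exists i, vx M (i, j)) &
      (forall q, vx M q -> #|children M q| = 0%N \/ #|children M q| = 2%N)].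
End CNM2.

From mathcomp Require Import all_boot all_order all_algebra all_fingroup.
Set Implicit Arguments. Unset Strict Implicit. Unset Printing Implicit Defensive.
Import GRing.Theory Num.Theory.
Local Open Scope ring_scope.

(* In a row, the leaf is the rightmost vertex: the nearest vertex to the right
   of it has a vertex on its left, hence none above, so its parent would be the
   leaf.  Hence every permutation s whose diagonal (i, s i) consists of
   vertices satisfies s <= pi pointwise, which forces s = pi.  The Leibniz
   expansion of the 0/1 matrix M therefore has the single nonzero term
   sign(pi). *)

Lemma perm_leq_eq (n : nat) (s pi : 'S_n) :
  (forall i, (s i <= pi i)%N) -> s = pi.
Proof.
move=> le_s_pi; apply/permP => i; apply/val_inj/eqP.
rewrite eqn_leq le_s_pi leqNgt; apply/negP => lt_s_pi.
have sum_perm (t : 'S_n) : (\sum_k (t k : nat) = \sum_(k : 'I_n) (k : nat))%N.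
  by rewrite [RHS](reindex_inj (@perm_inj _ t)).
have : (\sum_k (s k : nat) < \sum_k (pi k : nat))%N.
  rewrite (bigD1 i) //= [X in (_ < X)%N](bigD1 i) //=.
  by rewrite -addSn leq_add // leq_sum.
by rewrite !sum_perm ltnn.
Qed.

Lemma det_01_unique_support (R : comNzRingType) (n : nat) (M : 'M[R]_n)
    (pi : 'S_n) :
  (forall i j, M i j = 0 \/ M i j = 1) ->
  (forall i, M i (pi i) = 1) ->
  (forall s : 'S_n, (forall i, M i (s i) = 1) -> s = pi) ->
  \det M = (-1) ^+ pi.
Proof.
move=> M01 M_pi pi_unique.
rewrite /determinant (bigD1 pi) //= big1 ?mulr1 => [|i _]; last exact: M_pi.
rewrite big1 ?addr0 // => s s_neq_pi.
have [i M_is_neq1] : exists i, M i (s i) != 1.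
  apply/existsP; rewrite -negb_forall; apply: contra s_neq_pi => /forallP M_s.
  by apply/eqP/pi_unique => i; apply/eqP.
rewrite (bigD1 i) //=.
by case: (M01 i (s i)) => M_is; rewrite M_is ?mul0r ?mulr0 ?eqxx in M_is_neq1 *.
Qed.

Section LeafRightmost.
Variables (n : nat) (M : 'M[int]_n).
Hypothesis above_xor_left :
  forall p, vx M p -> ~~ is_root p -> has_above M p (+) has_left M p.

Lemma parent_of_left_neighbour (i : 'I_n) (l k : 'I_n) :
  vx M (i, l) -> vx M (i, k) -> (l < k)%N ->
  (forall k' : 'I_n, (l < k' < k)%N -> ~~ vx M (i, k')) ->
  parent_of M (i, k) (i, l).
Proof.
move=> vx_l vx_k lt_lk gap.
have has_left_k : has_left M (i, k) by apply/existsP; exists l; rewrite lt_lk.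
have not_root_k : ~~ is_root (i, k).
  rewrite /is_root /= negb_and; apply/orP; right.
  by rewrite -lt0n (leq_ltn_trans (leq0n l) lt_lk).
have no_above_k : has_above M (i, k) = false.
  by apply/negbTE; move: (@above_xor_left _ vx_k not_root_k); rewrite has_left_k addbT.
rewrite /parent_of vx_k not_root_k vx_l no_above_k /= eqxx lt_lk /=.
by apply/forallP => k'; apply/implyP; exact: gap.
Qed.

Lemma leaf_rightmost_in_row (i : 'I_n) (l j : 'I_n) :
  is_leaf M (i, l) -> vx M (i, j) -> (j <= l)%N.
Proof.
case/andP=> vx_l /eqP no_children vx_j; rewrite leqNgt; apply/negP => lt_lj.
pose right_of_l (k : 'I_n) := (l < k)%N && vx M (i, k).
have right_j : right_of_l j by rewrite /right_of_l lt_lj.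
case: (arg_minnP (fun k : 'I_n => (k : nat)) right_j) => k /andP[lt_lk vx_k] kmin.
have : parent_of M (i, k) (i, l).
  apply: parent_of_left_neighbour => // k' /andP[lt_lk' lt_k'k].
  apply/negP => vx_k'.
  by have := kmin k'; rewrite /right_of_l lt_lk' vx_k' leqNgt lt_k'k => /(_ isT).
by move=> par; move/card0_eq: no_children => /(_ (i, k)); rewrite inE par.
Qed.

End LeafRightmost.

Theorem proposition2p1 (n : nat) (M : 'M[int]_n) (pi : 'S_n) :
  (0 < n)%N -> is_CNM M -> (forall i : 'I_n, is_leaf M (i, pi i)) ->
  \det M = (-1) ^+ pi.
Proof.
move=> _ [M01 _ above_xor_left _ _] leaf_pi.
apply: det_01_unique_support => // [i|s M_s].
  by have /andP[/eqP] := leaf_pi i.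
apply: perm_leq_eq => i.
by apply: (leaf_rightmost_in_row above_xor_left (leaf_pi i)); apply/eqP/M_s.
Qed.
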